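(* Assume $\mu$ satisfies (C). Let $S(\Gamma):=\{\log\lambda_{\mathbf a}:\mathbf a\in\Gamma,\ \mathbf a\text{ has all entries strictly positive}\}$, where $\lambda_{\mathbf a}$ is the Perron–Frobenius (dominant) eigenvalue of $\mathbf a$. If the additive subgroup of $\mathbb R$ generated by $S(\Gamma)$ is dense in $\mathbb R$, then $\mu$ is non-arithmetic.
   Context: Let $|\cdot|$ be a norm on $\mathbb R^d$. $\mu$ is a probability measure on real $d\times d$ matrices, $\Gamma$ the closed semigroup generated by $\operatorname{supp}\mu$. Condition (C): $\mu$ is supported on nonnegative matrices, every matrix of $\Gamma$ is allowable (each row and column has a positive entry), and $\Gamma$ contains a matrix with all entries strictly positive. $\mathcal S_+:=\{x\in\mathbb R^d:x_i\ge0,|x|=1\}$, $\mathbf a\cdot x:=\mathbf ax/|\mathbf ax|$, $V(\Gamma)$ = closure of the set of normalized Perron–Frobenius eigenvectors $v_{\mathbf a}\in\mathcal S_+$ of matrices $\mathbf a\in\Gamma$ with all entries positive. $\mu$ is arithmetic if there exist $t>0$, $\theta\in[0,2\pi)$ and a function $\vartheta:\mathcal S_+\to\mathbb R$ with $\exp(it\log|\mathbf ax|-i\theta+i(\vartheta(\mathbf a\cdot x)-\vartheta(x)))=1$ for all $\mathbf a\in\Gamma$, $x\in V(\Gamma)$; otherwise non-arithmetic. *)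

(* A vector is a function nat -> R whose coordinates i >= d vanish;
   a matrix is a function nat -> nat -> R whose entries outside [0,d)^2 vanish. *)
From Stdlib Require Import Reals List.
Import ListNotations.
Open Scope R_scope.

Definition Vec := nat -> R.
Definition Mat := nat -> nat -> R.

Definition sumR (d : nat) (f : nat -> R) : R :=
  fold_right Rplus 0 (map f (seq 0 d)).

Definition padded (d : nat) (x : Vec) : Prop :=
  forall i, (d <= i)%nat -> x i = 0.

Definition wf_mat (d : nat) (a : Mat) : Prop :=
  forall i j, (d <= i)%nat \/ (d <= j)%nat -> a i j = 0.

Definition mulmv (d : nat) (a : Mat) (x : Vec) : Vec :=
  fun i => if Nat.ltb i d then sumR d (fun j => a i j * x j) else 0.

Definition mulmm (d : nat) (a b : Mat) : Mat :=
  fun i j => if andb (Nat.ltb i d) (Nat.ltb j d)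
             then sumR d (fun k => a i k * b k j) else 0.

Definition vscale (c : R) (x : Vec) : Vec := fun i => c * x i.
Definition vadd (x y : Vec) : Vec := fun i => x i + y i.

Definition IsNorm (d : nat) (N : Vec -> R) : Prop :=
  (forall x, padded d x -> 0 <= N x) /\
  (forall x, padded d x -> N x = 0 -> forall i, x i = 0) /\
  (forall c x, padded d x -> N (vscale c x) = Rabs c * N x) /\
  (forall x y, padded d x -> padded d y -> N (vadd x y) <= N x + N y).

(* topology (entrywise; all norms on finite-dim spaces are equivalent) *)
Definition mat_closure (d : nat) (T : Mat -> Prop) (a : Mat) : Prop :=
  forall eps, 0 < eps -> exists b, T b /\
    forall i j, (i < d)%nat -> (j < d)%nat -> Rabs (a i j - b i j) < eps.

Definition mat_closed (d : nat) (T : Mat -> Prop) : Prop :=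
  forall a, wf_mat d a -> mat_closure d T a -> T a.

Definition vec_closure (d : nat) (T : Vec -> Prop) (x : Vec) : Prop :=
  padded d x /\
  forall eps, 0 < eps -> exists v, T v /\
    forall i, (i < d)%nat -> Rabs (x i - v i) < eps.

Definition closed_semigroup (d : nat) (S : Mat -> Prop) (a : Mat) : Prop :=
  wf_mat d a /\
  forall T : Mat -> Prop,
    (forall b, S b -> T b) ->
    (forall b c, T b -> T c -> T (mulmm d b c)) ->
    mat_closed d T -> T a.

Definition nonneg_mat (d : nat) (a : Mat) : Prop :=
  forall i j, (i < d)%nat -> (j < d)%nat -> 0 <= a i j.

Definition pos_mat (d : nat) (a : Mat) : Prop :=
  forall i j, (i < d)%nat -> (j < d)%nat -> 0 < a i j.

Definition allowable (d : nat) (a : Mat) : Prop :=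
  (forall i, (i < d)%nat -> exists j, (j < d)%nat /\ 0 < a i j) /\
  (forall j, (j < d)%nat -> exists i, (i < d)%nat /\ 0 < a i j).

(* Condition (C), in terms of S = supp mu and Gamma *)
Definition condC (d : nat) (S : Mat -> Prop) : Prop :=
  (forall a, S a -> nonneg_mat d a) /\
  (forall a, closed_semigroup d S a -> allowable d a) /\
  (exists a, closed_semigroup d S a /\ pos_mat d a).

(* (lam, v) is the Perron-Frobenius pair of the positive matrix a:
   v is the (unique) eigenvector with positive entries, normalised in S_+,
   and lam its eigenvalue (the dominant eigenvalue). *)
Definition PF_pair (d : nat) (N : Vec -> R) (a : Mat) (lam : R) (v : Vec) : Prop :=
  padded d v /\ (forall i, (i < d)%nat -> 0 < v i) /\ N v = 1 /\
  mulmv d a v = vscale lam v.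

Definition SGamma (d : nat) (N : Vec -> R) (S : Mat -> Prop) (s : R) : Prop :=
  exists a lam v, closed_semigroup d S a /\ pos_mat d a /\
    PF_pair d N a lam v /\ s = ln lam.

Definition VGamma (d : nat) (N : Vec -> R) (S : Mat -> Prop) : Vec -> Prop :=
  vec_closure d (fun v => exists a lam, closed_semigroup d S a /\ pos_mat d a /\
                                         PF_pair d N a lam v).

Definition add_subgroup_gen (A : R -> Prop) (y : R) : Prop :=
  forall G : R -> Prop,
    G 0 -> (forall u v, G u -> G v -> G (u - v)) -> (forall u, A u -> G u) -> G y.

Definition dense_in_R (G : R -> Prop) : Prop :=
  forall x eps, 0 < eps -> exists y, G y /\ Rabs (x - y) < eps.

Definition act (d : nat) (N : Vec -> R) (a : Mat) (x : Vec) : Vec :=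
  vscale (/ N (mulmv d a x)) (mulmv d a x).

(* exp(i phi) = 1, written out as cos phi = 1 /\ sin phi = 0 *)
Definition arithmetic (d : nat) (N : Vec -> R) (S : Mat -> Prop) : Prop :=
  exists (t theta : R) (vt : Vec -> R),
    0 < t /\ 0 <= theta < 2 * PI /\
    forall a x, closed_semigroup d S a -> VGamma d N S x ->
      let phi := t * ln (N (mulmv d a x)) - theta + (vt (act d N a x) - vt x) in
      cos phi = 1 /\ sin phi = 0.

Definition non_arithmetic (d : nat) (N : Vec -> R) (S : Mat -> Prop) : Prop :=
  ~ arithmetic d N S.

From Stdlib Require Import Reals List Lra Lia ZArith FunctionalExtensionality.
Open Scope R_scope.

(* If a positive a in Gamma has Perron-Frobenius pair (lam, v), then v lies in
   V(Gamma), is fixed by the actions of a and a^2, and |a v| = lam, |a^2 v| = lam^2.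
   Arithmeticity applied to a and a^2 at x = v forces t log lam - theta and
   2 t log lam - theta into pi Z, hence t S(Gamma) is contained in pi Z.  Then
   t times the group generated by S(Gamma) lies in the discrete group pi Z, which
   contradicts density. *)

Lemma sumR_S n f : sumR (S n) f = sumR n f + f n.
Proof.
  unfold sumR. rewrite seq_S, map_app, fold_right_app. simpl.
  generalize (f n). induction (map f (seq 0 n)) as [|x l IH]; intro r; simpl.
  - ring.
  - rewrite IH. ring.
Qed.

Lemma sumR_ext n f g : (forall i, (i < n)%nat -> f i = g i) -> sumR n f = sumR n g.
Proof.
  induction n as [|n IH]; intro Hfg; [reflexivity|].
  rewrite !sumR_S, IH, Hfg; auto.
Qed.

Lemma sumR_scale n c f : sumR n (fun i => c * f i) = c * sumR n f.
Proof. induction n as [|n IH]; [unfold sumR; simpl; ring|]. rewrite !sumR_S, IH. ring. Qed.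

Lemma sumR_add n f g : sumR n (fun i => f i + g i) = sumR n f + sumR n g.
Proof. induction n as [|n IH]; [unfold sumR; simpl; ring|]. rewrite !sumR_S, IH. ring. Qed.

Lemma sumR_0 n : sumR n (fun _ => 0) = 0.
Proof. induction n as [|n IH]; [reflexivity|]. rewrite sumR_S, IH. ring. Qed.

Lemma sumR_swap n m F :
  sumR n (fun i => sumR m (fun j => F i j)) = sumR m (fun j => sumR n (fun i => F i j)).
Proof.
  induction n as [|n IH].
  - unfold sumR at 1. simpl. symmetry. apply sumR_0.
  - rewrite sumR_S, IH, <- sumR_add. apply sumR_ext. intros. now rewrite sumR_S.
Qed.

Lemma sumR_ge0 n f : (forall i, (i < n)%nat -> 0 <= f i) -> 0 <= sumR n f.
Proof.
  induction n as [|n IH]; intro Hf; [unfold sumR; simpl; lra|].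
  rewrite sumR_S. assert (0 <= f n) by (apply Hf; lia).
  assert (0 <= sumR n f) by (apply IH; intros; apply Hf; lia). lra.
Qed.

Lemma sumR_gt0 n f : (0 < n)%nat -> (forall i, (i < n)%nat -> 0 < f i) -> 0 < sumR n f.
Proof.
  intros Hn Hf. destruct n as [|n]; [lia|]. rewrite sumR_S.
  assert (0 <= sumR n f) by (apply sumR_ge0; intros; apply Rlt_le, Hf; lia).
  assert (0 < f n) by (apply Hf; lia). lra.
Qed.

Lemma mulmv_mulmm d a b x : mulmv d (mulmm d a b) x = mulmv d a (mulmv d b x).
Proof.
  apply functional_extensionality. intro i. unfold mulmv.
  destruct (Nat.ltb i d) eqn:Hi; [|reflexivity].
  transitivity (sumR d (fun j => sumR d (fun k => a i k * b k j * x j))).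
  - apply sumR_ext. intros j Hj. unfold mulmm. rewrite Hi.
    apply Nat.ltb_lt in Hj. rewrite Hj. simpl.
    rewrite Rmult_comm, <- sumR_scale. apply sumR_ext. intros. ring.
  - rewrite sumR_swap. apply sumR_ext. intros k Hk.
    apply Nat.ltb_lt in Hk. rewrite Hk, <- sumR_scale.
    apply sumR_ext. intros. ring.
Qed.

Lemma mulmv_vscale d a c x : mulmv d a (vscale c x) = vscale c (mulmv d a x).
Proof.
  apply functional_extensionality. intro i. unfold mulmv, vscale.
  destruct (Nat.ltb i d); [|ring].
  rewrite <- sumR_scale. apply sumR_ext. intros. ring.
Qed.

Lemma vscale_vscale c c' x : vscale c (vscale c' x) = vscale (c * c') x.
Proof. apply functional_extensionality. intro i. unfold vscale. ring. Qed.

Lemma wf_mat_mulmm d a b : wf_mat d (mulmm d a b).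
Proof.
  intros i j Hij. unfold mulmm.
  destruct (Nat.ltb i d) eqn:Hi, (Nat.ltb j d) eqn:Hj; simpl; auto.
  apply Nat.ltb_lt in Hi. apply Nat.ltb_lt in Hj. lia.
Qed.

Lemma closed_semigroup_mulmm d S a b :
  closed_semigroup d S a -> closed_semigroup d S b ->
  closed_semigroup d S (mulmm d a b).
Proof.
  intros [_ Ha] [_ Hb]. split; [apply wf_mat_mulmm|].
  intros T HS HM HC. apply HM; [apply Ha | apply Hb]; auto.
Qed.

Lemma vec_closure_mem d (T : Vec -> Prop) x : padded d x -> T x -> vec_closure d T x.
Proof.
  intros Hx HT. split; [exact Hx|]. intros eps Heps. exists x. split; [exact HT|].
  intros. unfold Rminus. now rewrite Rplus_opp_r, Rabs_R0.
Qed.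

Lemma PF_pair_dim_pos d N a lam v : IsNorm d N -> PF_pair d N a lam v -> (0 < d)%nat.
Proof.
  intros [_ [_ [Nscale _]]] [Hv [_ [Hnv _]]]. destruct d as [|d]; [|lia].
  assert (Hv0 : v = vscale 0 v).
  { apply functional_extensionality. intro i. unfold vscale.
    rewrite (Hv i); [ring|lia]. }
  rewrite Hv0, Nscale, Rabs_R0 in Hnv by exact Hv. lra.
Qed.

Lemma PF_pair_eigenvalue_pos d N a lam v :
  IsNorm d N -> pos_mat d a -> PF_pair d N a lam v -> 0 < lam.
Proof.
  intros HN Ha HPF. pose proof (PF_pair_dim_pos _ _ _ _ _ HN HPF) as Hd.
  destruct HPF as [_ [Hvpos [_ Heig]]].
  pose proof (f_equal (fun w => w 0%nat) Heig) as E. unfold mulmv, vscale in E.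
  apply Nat.ltb_lt in Hd as Hd'. rewrite Hd' in E.
  assert (0 < sumR d (fun j => a 0%nat j * v j)).
  { apply sumR_gt0; auto. intros. apply Rmult_lt_0_compat; auto. }
  assert (0 < v 0%nat) by auto. nra.
Qed.

Lemma act_eigenvector d N b v c :
  IsNorm d N -> padded d v -> N v = 1 -> 0 < c -> mulmv d b v = vscale c v ->
  N (mulmv d b v) = c /\ act d N b v = v.
Proof.
  intros [_ [_ [Nscale _]]] Hv Hnv Hc Heig.
  assert (Hnorm : N (mulmv d b v) = c).
  { rewrite Heig, Nscale, Hnv, Rabs_pos_eq by (auto; lra). ring. }
  split; [exact Hnorm|].
  unfold act. rewrite Hnorm, Heig, vscale_vscale, Rinv_l by lra.
  apply functional_extensionality. intro i. unfold vscale. ring.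
Qed.

Definition pi_multiple (y : R) : Prop := exists k : Z, y = IZR k * PI.

Lemma pi_multiple_0 : pi_multiple 0.
Proof. exists 0%Z. simpl. ring. Qed.

Lemma pi_multiple_sub u v : pi_multiple u -> pi_multiple v -> pi_multiple (u - v).
Proof.
  intros [k Hk] [l Hl]. exists (k - l)%Z. rewrite minus_IZR, Hk, Hl. ring.
Qed.

Lemma pi_multiple_gap y : pi_multiple y -> ~ (0 < y < PI).
Proof.
  intros [k ->] [Hlo Hhi]. pose proof PI_RGT_0.
  assert (0 < IZR k) by nra. assert (IZR k < 1) by nra.
  apply lt_0_IZR in H0. apply lt_IZR in H1. lia.
Qed.

Lemma sin_eq_0_pi_multiple x : sin x = 0 -> pi_multiple x.
Proof. intro Hx. destruct (sin_eq_0_0 x Hx) as [k Hk]. now exists k. Qed.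

Lemma not_dense_of_pi_multiple (G : R -> Prop) t :
  0 < t -> (forall y, G y -> pi_multiple (t * y)) -> ~ dense_in_R G.
Proof.
  intros Ht HG Hden. pose proof PI_RGT_0.
  assert (Hx : 0 < PI / (2 * t)) by (apply Rdiv_lt_0_compat; lra).
  destruct (Hden (PI / (2 * t)) (PI / (2 * t)) Hx) as [y [Gy Hy]].
  apply (pi_multiple_gap (t * y)); [now apply HG|].
  apply Rabs_def2 in Hy. destruct Hy as [Hy1 Hy2].
  assert (E : t * (PI / (2 * t)) = PI / 2) by (field; lra).
  split; nra.
Qed.

Lemma arithmetic_SGamma_pi_multiple d N S t theta (vt : Vec -> R) s :
  IsNorm d N ->
  (forall a x, closed_semigroup d S a -> VGamma d N S x ->
      let phi := t * ln (N (mulmv d a x)) - theta + (vt (act d N a x) - vt x) in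
      cos phi = 1 /\ sin phi = 0) ->
  SGamma d N S s -> pi_multiple (t * s).
Proof.
  intros HN Harith [a [lam [v [Ha [Hpos [HPF ->]]]]]].
  pose proof (PF_pair_eigenvalue_pos _ _ _ _ _ HN Hpos HPF) as Hlam.
  destruct HPF as [Hv [Hvpos [Hnv Heig]]].
  assert (HV : VGamma d N S v).
  { apply vec_closure_mem; [exact Hv|]. exists a, lam. exact (conj Ha (conj Hpos (conj Hv (conj Hvpos (conj Hnv Heig))))). }
  assert (Hphase : forall b c, closed_semigroup d S b -> 0 < c ->
            mulmv d b v = vscale c v -> pi_multiple (t * ln c - theta)).
  { intros b c Hb Hc Hbv.
    destruct (act_eigenvector _ _ _ _ _ HN Hv Hnv Hc Hbv) as [Hnorm Hact].
    destruct (Harith b v Hb HV) as [_ Hsin]. simpl in Hsin.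
    rewrite Hnorm, Hact, Rminus_diag, Rplus_0_r in Hsin.
    now apply sin_eq_0_pi_multiple. }
  assert (Heig2 : mulmv d (mulmm d a a) v = vscale (lam * lam) v).
  { now rewrite mulmv_mulmm, Heig, mulmv_vscale, Heig, vscale_vscale. }
  pose proof (Hphase a lam Ha Hlam Heig) as P1.
  pose proof (Hphase _ _ (closed_semigroup_mulmm _ _ _ _ Ha Ha)
                (Rmult_lt_0_compat _ _ Hlam Hlam) Heig2) as P2.
  rewrite ln_mult in P2 by exact Hlam.
  replace (t * ln lam) with (t * (ln lam + ln lam) - theta - (t * ln lam - theta))
    by ring.
  now apply pi_multiple_sub.
Qed.

Theorem lemma2p4 (d : nat) (N : Vec -> R) (suppmu : Mat -> Prop) :
  IsNorm d N ->
  (forall a, suppmu a -> wf_mat d a) ->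
  (exists a, suppmu a) ->
  mat_closed d suppmu ->
  condC d suppmu ->
  dense_in_R (add_subgroup_gen (SGamma d N suppmu)) ->
  non_arithmetic d N suppmu.
Proof.
  intros HN _ _ _ _ Hden [t [theta [vt [Ht [_ Harith]]]]].
  apply (not_dense_of_pi_multiple (add_subgroup_gen (SGamma d N suppmu)) t Ht); [|exact Hden].
  intros y Gy. apply Gy.
  - rewrite Rmult_0_r. exact pi_multiple_0.
  - intros u v Hu Hv. rewrite Rmult_minus_distr_l. now apply pi_multiple_sub.
  - intros s Hs. exact (arithmetic_SGamma_pi_multiple _ _ _ _ _ _ _ HN Harith Hs).
Qed.
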